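(* Let $p\ge1$, $u\in E^p$ and $\alpha,\beta\in\mathbb{R}$. Then $$D(\alpha u,\beta u)\le |\alpha-\beta|\,\max\{\|y\|: y\in[u]_0\}.$$
   Context: A fuzzy subset of $\mathbb{R}^p$ is a function $u:\mathbb{R}^p\to[0,1]$. Its $\alpha$-cut is $[u]_\alpha=\{x\in\mathbb{R}^p: u(x)\ge\alpha\}$ for $\alpha\in(0,1]$, and $[u]_0=\overline{\{x\in\mathbb{R}^p: u(x)>0\}}$. The set $E^p$ of $p$-dimensional fuzzy numbers consists of all fuzzy subsets $u$ of $\mathbb{R}^p$ such that $[u]_\alpha$ is a nonempty compact convex subset of $\mathbb{R}^p$ for every $\alpha\in[0,1]$. For $u\in E^p$ and $r\in\mathbb{R}$, $r u$ is the element of $E^p$ determined by $[r u]_\gamma=\{rx: x\in[u]_\gamma\}$ for all $\gamma\in[0,1]$. The sendograph of $u\in E^p$ is $\mathrm{send}\,u=\{(x,\gamma)\in[u]_0\times[0,1]: u(x)\ge\gamma\}\subset\mathbb{R}^{p+1}$. For nonempty compact $U,V\subset\mathbb{R}^{p+1}$ (with the Euclidean metric $d$), the Hausdorff metric is $H(U,V)=\max\{H^*(U,V),H^*(V,U)\}$ with $H^*(U,V)=\sup_{a\in U}\inf_{b\in V}d(a,b)$. The sendograph metric on $E^p$ is $D(u,v)=H(\mathrm{send}\,u,\mathrm{send}\,v)$. $\|\cdot\|$ is the Euclidean norm on $\mathbb{R}^p$. *)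

From HB Require Import structures.
From mathcomp Require Import all_boot all_order all_algebra.
From mathcomp Require Import all_classical all_reals all_analysis.
Set Implicit Arguments. Unset Strict Implicit. Unset Printing Implicit Defensive.
Import Order.TTheory GRing.Theory Num.Theory.
Import numFieldTopology.Exports numFieldNormedType.Exports.
Local Open Scope classical_set_scope.
Local Open Scope ring_scope.

Section FuzzyDefs.
Variables (R : realType) (p : nat).
Notation vec := 'rV[R]_p.

Definition enorm (x : vec) : R := Num.sqrt (\sum_(i < p) (x ord0 i) ^+ 2).

Definition acut (u : vec -> R) (a : R) : set vec :=
  if 0 < a then [set x | a <= u x] else closure [set x | 0 < u x].

Definition convex_set (A : set vec) : Prop :=
  forall x y t, A x -> A y -> 0 <= t <= 1 -> A (t *: x + (1 - t) *: y).

Definition fuzzy_number (u : vec -> R) : Prop :=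
  (forall x, 0 <= u x <= 1) /\
  (forall a, 0 <= a <= 1 ->
     acut u a !=set0 /\ compact (acut u a) /\ convex_set (acut u a)).

(* r u : the fuzzy number with [r u]_g = r [u]_g for all g *)
Definition fscale (r : R) (u : vec -> R) : vec -> R :=
  fun x => if r != 0 then u (r^-1 *: x) else (if x == 0 then 1 else 0).

(* R^{p+1} rendered as R^p * R, with the Euclidean metric *)
Definition dist (a b : vec * R) : R :=
  Num.sqrt (enorm (a.1 - b.1) ^+ 2 + (a.2 - b.2) ^+ 2).

Definition send (u : vec -> R) : set (vec * R) :=
  [set xg | acut u 0 xg.1 /\ 0 <= xg.2 <= 1 /\ xg.2 <= u xg.1].

Definition hausdorff_star (U V : set (vec * R)) : R :=
  sup [set inf [set dist a b | b in V] | a in U].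

Definition hausdorff (U V : set (vec * R)) : R :=
  Num.max (hausdorff_star U V) (hausdorff_star V U).

Definition send_metric (u v : vec -> R) : R := hausdorff (send u) (send v).

End FuzzyDefs.

(** The sendograph of [r u] is the image of [send u] under
    [(y, g) |-> (r y, g)].  Hence every point [(alpha y, g)] of
    [send (alpha u)] is matched by the point [(beta y, g)] of [send (beta u)],
    at distance [|alpha - beta| ||y||] with [y] in [[u]_0], and symmetrically. *)
From HB Require Import structures.
From mathcomp Require Import all_boot all_order all_algebra.
From mathcomp Require Import all_classical all_reals all_analysis.
Import Order.TTheory GRing.Theory Num.Theory.
Import numFieldTopology.Exports numFieldNormedType.Exports.
Local Open Scope classical_set_scope.
Local Open Scope ring_scope.
Set Implicit Arguments. Unset Strict Implicit. Unset Printing Implicit Defensive.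

Lemma closure_sub_preimage (T U : topologicalType) (f : T -> U)
    (A : set T) (E : set U) :
  continuous f -> A `<=` f @^-1` E -> closure A `<=` f @^-1` closure E.
Proof.
move=> /continuous_closedP fc AE.
rewrite [X in _ `<=` X](closure_id _).1; last exact: fc _ (@closed_closure _ E).
by apply: closureS => x /AE; apply: (@subset_closure _ E).
Qed.

Lemma closure_sub_set1 (T : topologicalType) (A : set T) (x : T) :
  hausdorff_space T -> A `<=` [set x] -> closure A `<=` [set x].
Proof.
move=> /hausdorff_accessible /accessible_closed_set1 cl1 Ax.
by rewrite [X in _ `<=` X](closure_id _).1 //; exact: closureS.
Qed.

Section SendographMetric.
Variables (R : realType) (p : nat).
Notation vec := 'rV[R]_p.

Lemma enorm_ge0 (y : vec) : 0 <= enorm y.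
Proof. exact: sqrtr_ge0. Qed.

Lemma enormZ (k : R) (y : vec) : enorm (k *: y) = `|k| * enorm y.
Proof.
rewrite /enorm; under eq_bigr => i _ do rewrite mxE exprMn.
by rewrite -mulr_sumr sqrtrM ?sqr_ge0 // sqrtr_sqr.
Qed.

Lemma enorm_le_mx_norm (y : vec) : enorm y <= Num.sqrt p%:R * `|y|.
Proof.
have -> : Num.sqrt p%:R * `|y| = Num.sqrt (\sum_(i < p) `|y| ^+ 2).
  rewrite sumr_const card_ord -[`|y| ^+ 2 *+ p]mulr_natr mulrC.
  by rewrite sqrtrM ?ler0n // sqrtr_sqr normr_id.
rewrite /enorm ler_sqrt; last by apply: sumr_ge0 => i _; exact: sqr_ge0.
apply: ler_sum => i _; rewrite -real_normK ?num_real //.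
apply: lerXn2r; rewrite ?nnegrE //.
by rewrite [X in _ <= X]mx_normrE; exact: (le_bigmax _ _ (ord0, i)).
Qed.

Lemma compact_enorm_ubound (A : set vec) :
  compact A -> has_ubound [set enorm y | y in A].
Proof.
case/compact_bounded => M [_ HM].
exists (Num.sqrt p%:R * (M + 1)) => _ [y Ay <-].
apply: (le_trans (enorm_le_mx_norm y)); apply: ler_wpM2l; first exact: sqrtr_ge0.
by apply: (HM (M + 1)) => //; rewrite ltrDl ltr01.
Qed.

Lemma dist_scale (a b g : R) (y : vec) :
  dist (a *: y, g) (b *: y, g) = `|a - b| * enorm y.
Proof.
rewrite /dist /= subrr expr0n addr0 -scalerBl enormZ sqrtr_sqr.
by rewrite normrM normr_id [`|enorm y|]ger0_norm // enorm_ge0.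
Qed.

Lemma hausdorff_star_le (U V : set (vec * R)) (c : R) : 0 <= c ->
  (forall a, U a -> exists2 b, V b & dist a b <= c) -> hausdorff_star U V <= c.
Proof.
move=> c0 near_UV; rewrite /hausdorff_star.
set T := [set inf _ | a in U].
have ubT : ubound T c.
  move=> _ [a Ua <-]; have [b Vb abc] := near_UV a Ua.
  apply: le_trans abc; apply: ge_inf; last by exists b.
  by exists 0 => _ [b' _ <-]; exact: sqrtr_ge0.
have [T0|T0] := pselect (T !=set0); first exact: ge_sup.
suff -> : T = set0 by rewrite sup0.
by apply/seteqP; split=> // z Tz; apply: T0; exists z.
Qed.

Lemma acut0E (v : vec -> R) : acut v 0 = closure [set x | 0 < v x].
Proof. by rewrite /acut ltxx. Qed.

End SendographMetric.

Section ScaledFuzzyNumber.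
Variables (R : realType) (p : nat) (u : 'rV[R]_p -> R).
Hypothesis hu : fuzzy_number u.
Notation vec := 'rV[R]_p.

Lemma acut_nonempty (a : R) : 0 <= a <= 1 -> acut u a !=set0.
Proof. by move=> a01; have [_ /(_ a a01) []] := hu. Qed.

Lemma compact_acut (a : R) : 0 <= a <= 1 -> compact (acut u a).
Proof. by move=> a01; have [_ /(_ a a01) [_ []]] := hu. Qed.

Lemma fscaleZ (a : R) (y : vec) : fscale a u (a *: y) = if a == 0 then 1 else u y.
Proof.
rewrite /fscale; have [->|a0] := eqVneq a 0; first by rewrite scale0r eqxx.
by rewrite scalerA mulVf // scale1r.
Qed.

Lemma acut0_fscale (a : R) : acut (fscale a u) 0 = [set a *: y | y in acut u 0].
Proof.
rewrite !acut0E; apply/seteqP; split => [x|_ [y cut_y <-]].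
- have [a0|a0] := eqVneq a 0.
    have supp0 : [set z | 0 < fscale a u z] `<=` [set 0].
      by move=> z /=; rewrite /fscale a0 eqxx /=; case: eqP => // _; rewrite ltxx.
    move=> /(closure_sub_set1 (@norm_hausdorff _ _) supp0) /= ->.
    have [y] : acut u 0 !=set0 by apply: acut_nonempty; rewrite lexx ler01.
    by rewrite acut0E => cut_y; exists y; rewrite // a0 scale0r.
  move=> cl_x; exists (a^-1 *: x); last by rewrite scalerA divff // scale1r.
  apply: (closure_sub_preimage (@scaler_continuous _ _ a^-1) _ cl_x) => z /=.
  by rewrite /fscale a0.
- have [->|a0] := eqVneq a 0.
    by rewrite scale0r; apply: subset_closure; rewrite /= /fscale eqxx /= eqxx ltr01.
  apply: (closure_sub_preimage (@scaler_continuous _ _ a) _ cut_y) => z /=.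
  by rewrite fscaleZ (negPf a0).
Qed.

Lemma sendZ (a : R) :
  send (fscale a u) = [set (a *: yg.1, yg.2) | yg in send u].
Proof.
apply/seteqP; split => [[x g] [+ [/= g01 g_le]]|_ [[y g] [cut_y [g01 g_le]] <-]].
- rewrite /= acut0_fscale => -[y cut_y ax]; subst x.
  move: g_le; rewrite fscaleZ; have [a0 g_le1|_ g_le] := eqVneq a 0; last first.
    by exists (y, g).
  (* [y] need not satisfy [g <= u y]; any point of the 1-cut does. *)
  have [z /=] : acut u 1 !=set0 by apply: acut_nonempty; rewrite ler01 lexx.
  rewrite /acut ltr01 => z1.
  have cut_z : acut u 0 z by rewrite acut0E; apply: subset_closure; exact: lt_le_trans z1.
  exists (z, g); last by rewrite /= a0 !scale0r.
  by split=> //; split=> //; case/andP: g01 => _ /le_trans; apply.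
- split; first by rewrite acut0_fscale; exists y.
  split=> //=; rewrite fscaleZ; case: eqP => // _.
  by case/andP: g01.
Qed.

Lemma le_sup_enorm_acut0 (y : vec) :
  acut u 0 y -> enorm y <= sup [set enorm z | z in acut u 0].
Proof.
move=> cut_y; apply: ub_le_sup; last by exists y.
by apply: compact_enorm_ubound; apply: compact_acut; rewrite lexx ler01.
Qed.

Lemma sup_enorm_acut0_ge0 : 0 <= sup [set enorm z | z in acut u 0].
Proof.
have [y cut_y] : acut u 0 !=set0 by apply: acut_nonempty; rewrite lexx ler01.
exact: le_trans (enorm_ge0 y) (le_sup_enorm_acut0 cut_y).
Qed.

Lemma hausdorff_star_sendZ (a b : R) :
  hausdorff_star (send (fscale a u)) (send (fscale b u))
    <= `|a - b| * sup [set enorm y | y in acut u 0].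
Proof.
apply: hausdorff_star_le; first exact: mulr_ge0 (normr_ge0 _) sup_enorm_acut0_ge0.
rewrite sendZ => _ [[y g] send_yg <-]; exists (b *: y, g).
  by rewrite sendZ; exists (y, g).
rewrite dist_scale; apply: ler_wpM2l => //.
by case: send_yg => cut_y _; exact: le_sup_enorm_acut0.
Qed.

End ScaledFuzzyNumber.

Theorem theorem2p3 (R : realType) (p : nat) (hp : (0 < p)%N)
  (u : 'rV[R]_p -> R) (hu : fuzzy_number u) (alpha beta : R) :
  send_metric (fscale alpha u) (fscale beta u)
    <= `|alpha - beta| * sup [set enorm y | y in acut u 0].
Proof.
rewrite /send_metric /hausdorff ge_max !hausdorff_star_sendZ //.
by rewrite distrC hausdorff_star_sendZ.
Qed.
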